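(* Let $f:\mathbb{R}^n\to\mathbb{R}$ satisfy: (A1) $f\in C^\infty(\mathbb{R}^n)$; (A2) there is $M>0$ with $f(x)>0$ for all $x\notin B(0,M)$; (A3) $\nabla f(p)\neq0$ for all $p\in\mathcal{B}:=\{p:f(p)=0\}$. For $p\in\mathcal{B}$, $r>0$ and $\beta\in(0,1)$ define the open slab \[\Gamma_r(p)=\{p+v:\ v\in\mathbb{R}^n,\ |v^T\nabla f(p)|<\beta r\|\nabla f(p)\|\}.\] Then for each thickness factor $\beta\in(0,1)$ there exists a distance $\sigma_2(\beta)>0$ such that for all $p\in\mathcal{B}$ and all $0<r<\sigma_2(\beta)$, \[\mathcal{B}\cap B(p,r)\subseteq\Gamma_r(p).\]
   Context: $\|\cdot\|$ is the Euclidean norm and $B(p,r)$ the open Euclidean ball of center $p$ and radius $r$. Under (A1)–(A3), $\mathcal{B}$ is a compact smooth hypersurface. *)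

From HB Require Import structures.
From mathcomp Require Import all_boot all_order all_algebra.
From mathcomp Require Import all_classical all_reals all_analysis.
Set Implicit Arguments. Unset Strict Implicit. Unset Printing Implicit Defensive.
Import Order.TTheory GRing.Theory Num.Theory.
Import numFieldNormedType.Exports.
Local Open Scope ring_scope.

Section Defs.
Variables (R : realType) (n : nat).
Local Notation V := 'rV[R]_n.

Definition ebasis (i : 'I_n) : V := delta_mx 0 i.

(* Euclidean inner product and Euclidean norm (the library norm on
   matrices is the max norm, so we define the Euclidean one explicitly). *)
Definition dotv (u v : V) : R := \sum_(i < n) u 0 i * v 0 i.
Definition enorm (v : V) : R := Num.sqrt (dotv v v).

Definition eball (p : V) (r : R) : set V := [set q | enorm (q - p) < r].

Definition partial (f : V -> R) (i : 'I_n) : V -> R :=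
  fun x => derive f x (ebasis i).

Definition iter_partial (s : seq 'I_n) (f : V -> R) : V -> R :=
  foldr (fun i g => partial g i) f s.

Definition smooth (f : V -> R) : Prop :=
  forall s : seq 'I_n,
    continuous (iter_partial s f) /\
    forall (i : 'I_n) (x : V), derivable (iter_partial s f) x (ebasis i).

Definition grad (f : V -> R) (p : V) : V := \row_(i < n) partial f i p.

Definition zeroset (f : V -> R) : set V := [set p | f p = 0].

Definition slab (f : V -> R) (beta r : R) (p : V) : set V :=
  [set q | exists v : V, q = p + v /\
     `| dotv v (grad f p) | < beta * r * enorm (grad f p)].

End Defs.

From HB Require Import structures.
From mathcomp Require Import all_boot all_order all_algebra.
From mathcomp Require Import all_classical all_reals all_analysis.
From mathcomp Require Import lra.
Set Implicit Arguments. Unset Strict Implicit. Unset Printing Implicit Defensive.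
Import Order.TTheory GRing.Theory Num.Theory.
Import numFieldNormedType.Exports.
Local Open Scope ring_scope.
Local Open Scope classical_set_scope.

(* The zero set B is closed and bounded, hence compact.  By compactness the
   gradient norm exceeds some c > 0 on B, and there is d > 0 such that every
   partial derivative varies by less than eps on each ball of radius d centred
   on B.  For p, q in B with |q - p| < r < d, f q - f p = 0, so the mean value
   theorem applied coordinate by coordinate along the path from p to q gives
   |(q - p).grad f(p)| <= n r eps, which is below beta r c < beta r |grad f(p)|
   for eps = beta c / (n + 1). *)

Lemma compact_norm_lower_bound (R : realType) (T : topologicalType) (I : Type)
    (g : I -> T -> R) (K : set T) :
  compact K -> (forall i, continuous (g i)) ->
  (forall p, K p -> exists i, g i p != 0) ->
  exists2 c : R, 0 < c & forall p, K p -> exists i, c < `|g i p|.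
Proof.
move=> /compact_near_coveringP Kc gc gK.
have : \forall c \near 0^'+, K `<=` (fun p => exists i, c < `|g i p|).
  apply: Kc => p /gK[i gip0].
  have gip2 : 0 < `|g i p| / 2 by rewrite divr_gt0 // normr_gt0.
  near=> x c; exists i.
  have gx : `|g i p - g i x| < `|g i p| / 2.
    by near: x; exact: cvgr_dist_lt (gc i p) _ gip2.
  have cg : c < `|g i p| / 2 by near: c; exact: nbhs_right_lt.
  have := ler_normD (g i p - g i x) (g i x); rewrite subrK /=; lra.
move=> Kc_near; have [c [c0 Kcc]] := filter_ex (filterI (nbhs_right_gt 0) Kc_near).
by exists c.
Unshelve. all: by end_near.
Qed.

Lemma compact_uniform_continuity (R : realType) (T : pseudoMetricType R)
    (I : finType) (g : I -> T -> R) (K : set T) :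
  compact K -> (forall i, continuous (g i)) -> forall eps : R, 0 < eps ->
  exists2 d : R, 0 < d &
    forall p, K p -> forall x, ball p d x -> forall i, `|g i x - g i p| < eps.
Proof.
move=> /compact_near_coveringP Kc gc eps eps0.
have : \forall d \near 0^'+, K `<=` (fun p =>
    forall x, ball p d x -> forall i, `|g i x - g i p| < eps).
  apply: Kc => p _.
  have eps2 : 0 < eps / 2 by rewrite divr_gt0.
  have : \forall x \near p, forall i, `|g i p - g i x| < eps / 2.
    by apply: filter_forall => i; exact: cvgr_dist_lt (gc i p) _ eps2.
  move=> /nbhs_ballP[eta eta0 gp].
  have eta2 : 0 < eta / 2 by rewrite divr_gt0.
  near=> y d => x dyx i.
  have py : ball p (eta / 2) y by near: y; exact: nbhsx_ballx.
  have deta : d < eta / 2 by near: d; exact: nbhs_right_lt.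
  have px : ball p eta x.
    rewrite [eta]splitr; apply: ball_triangle py _.
    exact: le_ball (ltW deta) _ dyx.
  have py_eta : ball p eta y.
    by apply: le_ball py; rewrite ler_pdivrMr // ler_pMr // ler1n.
  have := gp _ px i; have := gp _ py_eta i.
  have := ler_normD (g i x - g i p) (g i p - g i y).
  rewrite addrA subrK [`|g i x - g i p|]distrC; lra.
move=> Kd_near; have [d [d0 Kdd]] := filter_ex (filterI (nbhs_right_gt 0) Kd_near).
by exists d.
Unshelve. all: by end_near.
Qed.

Lemma MVT_from0 (R : realType) (phi dphi : R -> R) :
  (forall t : R, is_derive t 1 phi (dphi t)) ->
  forall b, exists2 c, `|c| <= `|b| & phi b - phi 0 = dphi c * b.
Proof.
move=> D b.
have phic a a' : {within `[a, a'], continuous phi}.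
  by apply: derivable_within_continuous => x _; have [] := D x.
case: (ltgtP 0 b) => [b0|b0|<-]; last by exists 0; rewrite ?normr0 ?subrr ?mulr0.
- have [c] := MVT b0 (fun x _ => D x) (phic _ _).
  rewrite in_itv /= subr0 => /andP[c0 cb] ->; exists c => //.
  by rewrite !gtr0_norm // ltW.
- have [c] := MVT b0 (fun x _ => D x) (phic _ _).
  rewrite in_itv /= sub0r mulrN => /andP[bc c0] E; exists c.
    by rewrite !ltr0_norm // lerN2 ltW.
  by rewrite -opprB E opprK.
Qed.

Section Euclidean.
Variables (R : realType) (n : nat).
Local Notation V := 'rV[R]_n.

Lemma enorm_ge0 (v : V) : 0 <= enorm v.
Proof. exact: sqrtr_ge0. Qed.

Lemma coord_le_enorm (v : V) i : `|v 0 i| <= enorm v.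
Proof.
rewrite /enorm /dotv -sqrtr_sqr ler_wsqrtr // (bigD1 i) //= expr2 lerDl.
by apply: sumr_ge0 => j _; rewrite -expr2 sqr_ge0.
Qed.

Lemma row_normr_le (v : V) (e : R) :
  0 <= e -> (forall j, `|v 0 j| <= e) -> `|v| <= e.
Proof.
move=> e0 ve; rewrite [`|v|]mx_normrE; apply: bigmax_le => // -[i j] _ /=.
by rewrite [i]ord1.
Qed.

Lemma normr_le_enorm (v : V) : `|v| <= enorm v.
Proof. exact: row_normr_le (enorm_ge0 v) (coord_le_enorm v). Qed.

Definition row_prefix (k : nat) (v : V) : V :=
  \row_j (if (j < k)%N then v 0 j else 0).

Lemma row_prefix0 (v : V) : row_prefix 0 v = 0.
Proof. by apply/rowP => j; rewrite !mxE. Qed.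

Lemma row_prefix_full (v : V) : row_prefix n v = v.
Proof. by apply/rowP => j; rewrite !mxE ltn_ord. Qed.

Lemma row_prefixS (v : V) (i : 'I_n) :
  row_prefix i.+1 v = row_prefix i v + v 0 i *: ebasis R i.
Proof.
apply/rowP => j; rewrite !mxE /= ltnS leq_eqVlt.
case: (eqVneq j i) => [->|ji] /=; first by rewrite ltnn eqxx mulr1 add0r.
by move: ji; rewrite -(inj_eq val_inj) => /negbTE -> /=; rewrite mulr0 addr0.
Qed.

Lemma is_derive_along_line (f : V -> R) (a w : V) (t : R) :
  derivable f (a + t *: w) w ->
  is_derive t 1 (fun s => f (a + s *: w)) (derive f (a + t *: w) w).
Proof.
move=> fw.
have quotE : (fun h : R => h^-1 *: (f (a + (h *: 1 + t) *: w) - f (a + t *: w)))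
    = (fun h => h^-1 *: (f (h *: w + (a + t *: w)) - f (a + t *: w))).
  by apply: funext => h; rewrite -[h *: 1]/(h * 1) mulr1 scalerDl addrCA.
by split; rewrite /derivable /derive /= quotE.
Qed.

Lemma first_order_remainder_le (f : V -> R) (p v : V) (eps : R) :
  (forall x (i : 'I_n), derivable f x (ebasis R i)) ->
  (forall (i : 'I_n) (w : V), `|w| <= enorm v ->
     `|partial f i (p + w) - partial f i p| <= eps) ->
  `|f (p + v) - f p - dotv v (grad f p)| <= n%:R * (enorm v * eps).
Proof.
move=> fd near_eps.
have telescopeE : f (p + v) - f p =
    \sum_(i < n) (f (p + row_prefix i.+1 v) - f (p + row_prefix i v)).
  rewrite -(big_mkord xpredT
    (fun k => f (p + row_prefix k.+1 v) - f (p + row_prefix k v))).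
  by rewrite telescope_sumr // row_prefix_full row_prefix0 addr0.
have dotE : dotv v (grad f p) = \sum_(i < n) v 0 i * partial f i p.
  by apply: eq_bigr => i _; rewrite mxE.
rewrite telescopeE dotE -sumrB (le_trans (ler_norm_sum _ _ _)) //.
have -> : n%:R * (enorm v * eps) = \sum_(i < n) (enorm v * eps).
  by rewrite sumr_const card_ord mulr_natl.
apply: ler_sum => i _.
set a := p + row_prefix i v.
have -> : f (p + row_prefix i.+1 v) = f (a + v 0 i *: ebasis R i).
  by rewrite row_prefixS addrA.
have -> : f (p + row_prefix i v) = f (a + 0 *: ebasis R i).
  by rewrite scale0r addr0.
have [c cv ->] :=
  MVT_from0 (fun t => is_derive_along_line (fd (a + t *: ebasis R i) i)) (v 0 i).
have seg_le : `|row_prefix i v + c *: ebasis R i| <= enorm v.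
  apply: (row_normr_le (enorm_ge0 v)) => j; rewrite !mxE.
  case: (eqVneq j i) => [->|_].
    by rewrite ltnn eqxx mulr1 add0r (le_trans cv) ?coord_le_enorm.
  by rewrite mulr0 addr0; case: ifP; rewrite ?normr0 ?enorm_ge0 ?coord_le_enorm.
have := near_eps i _ seg_le; rewrite /a -addrA => partial_le.
rewrite mulrC -mulrBr normrM.
apply: le_trans (ler_wpM2l (normr_ge0 _) partial_le) _.
by rewrite ler_wpM2r ?coord_le_enorm // (le_trans (normr_ge0 _) partial_le).
Qed.

Lemma zeroset_compact (f : V -> R) (M : R) : continuous f ->
  (forall x, ~ eball 0 M x -> 0 < f x) -> compact (zeroset f).
Proof.
move=> fc fpos; apply: bounded_closed_compact; last first.
  exact: (continuous_closedP f).1 fc _ (@closed_eq R 0).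
exists M; split; first exact: num_real.
move=> M' MM' x fx0; apply: ltW; apply: le_lt_trans MM'.
apply: le_trans (normr_le_enorm x) _; rewrite -[x]subr0.
by apply: ltW; apply: contrapT => /fpos; rewrite fx0 ltxx.
Qed.

Lemma exists_partial_neq0 (f : V -> R) (p : V) :
  grad f p != 0 -> exists i, partial f i p != 0.
Proof.
move=> /eqP gp0; apply: contrapT => partial0; apply: gp0; apply/rowP => i.
by rewrite !mxE; apply/eqP/negPn/negP => ?; apply: partial0; exists i.
Qed.

Lemma normr_partial_le_enorm_grad (f : V -> R) (p : V) i :
  `|partial f i p| <= enorm (grad f p).
Proof. by have := coord_le_enorm (grad f p) i; rewrite mxE. Qed.

End Euclidean.

Theorem lemma3 (R : realType) (n : nat) (f : 'rV[R]_n -> R)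
  (A1 : smooth f)
  (A2 : exists M : R, 0 < M /\ forall x : 'rV[R]_n, ~ eball 0 M x -> 0 < f x)
  (A3 : forall p : 'rV[R]_n, zeroset f p -> grad f p != 0) :
  forall beta : R, 0 < beta < 1 ->
  exists sigma2 : R, 0 < sigma2 /\
    forall (p : 'rV[R]_n) (r : R), zeroset f p -> 0 < r < sigma2 ->
      zeroset f `&` eball p r `<=` slab f beta r p.
Proof.
move=> beta /andP[beta0 _].
have fc : continuous f := (A1 [::]).1.
have fd x i : derivable f x (ebasis R i) := (A1 [::]).2 i x.
have partialc i : continuous (partial f i) := (A1 [:: i]).1.
have [M [_ fpos]] := A2.
have Bc := zeroset_compact fc fpos.
have [c c0 partial_gt] := compact_norm_lower_bound Bc partialc
  (fun p Bp => exists_partial_neq0 (A3 p Bp)).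
pose eps := beta * c / n.+1%:R.
have eps0 : 0 < eps by rewrite divr_gt0 ?mulr_gt0.
have [d d0 partial_near] := compact_uniform_continuity Bc partialc eps0.
exists d; split=> // p r Bp /andP[r0 rd] q [Bq pqr].
exists (q - p); split; first by rewrite subrKC.
have grad_gt : c < enorm (grad f p).
  have [i ci] := partial_gt p Bp.
  exact: lt_le_trans ci (normr_partial_le_enorm_grad _ _ _).
have dot_le : `|dotv (q - p) (grad f p)| <= n%:R * (enorm (q - p) * eps).
  have := first_order_remainder_le (p := p) (v := q - p) (eps := eps) fd.
  rewrite subrKC Bp Bq subr0 sub0r normrN; apply => i w wqp.
  apply/ltW/partial_near => //; rewrite -ball_normE /= opprD addNKr normrN.
  exact: le_lt_trans wqp (lt_trans pqr rd).
have : enorm (q - p) < r := pqr.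
have : n.+1%:R * eps = beta * c by rewrite mulrC divfK.
have : 0 <= n%:R * eps by rewrite mulr_ge0 // ltW.
have : 0 < r * eps by rewrite mulr_gt0.
have : 0 < beta * r by rewrite mulr_gt0.
have : 0 <= enorm (q - p) := enorm_ge0 _.
(* n |q - p| eps <= n r eps < (n + 1) r eps = beta c r < beta r |grad f p| *)
move: dot_le grad_gt; rewrite -natr1; nra.
Qed.
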